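(* Let $\ell\ge1$, $\mathbf u=(u_1,\dots,u_\ell)\in\Bbbk^\ell$, $1\le i\le\ell$ and $r\ge1$, and put $g_{r,i}:=g_r(u_1)\circ g_r(u_2)\circ\cdots\circ g_r(u_i)\in\mathrm{End}_{\mathcal{AS}}(r)$. Let $\gamma$ be a strict $(1+\ell)$-multicomposition with $\gamma^{(0)}=\gamma^{(1)}=\cdots=\gamma^{(i-1)}=\emptyset$ and $\gamma^{(i)}=(r,\gamma^{(i)}_2,\dots)$, so that $w(\gamma)=(u_1,\dots,u_i,r,y)$ for some word $y$. Then the image in $\mathrm{End}_{\mathcal{S}chur_{\mathbf u}}(\gamma)$ of the morphism $1_{u_1}\otimes\cdots\otimes1_{u_i}\otimes g_{r,i}\otimes 1_y$ is zero.
   Context: Let $\Bbbk$ be a commutative ring with $1$. The affine Schur category $\mathcal{AS}$ is the strict $\Bbbk$-linear monoidal category defined as follows. Generating objects: the integers $a\ge1$ (black strands of thickness $a$) and the elements $u\in\Bbbk$ (red strands labelled $u$); objects are finite words in these, tensor product being concatenation. Generating morphisms, for $a,b\ge1$, $u\in\Bbbk$: merge $M_{a,b}:(a,b)\to(a+b)$, split $S_{a,b}:(a+b)\to(a,b)$, crossing $X_{a,b}:(a,b)\to(b,a)$, dot $\omega_a:(a)\to(a)$, traverse-up $U_{a,u}:(a,u)\to(u,a)$, traverse-down $D_{u,a}:(u,a)\to(a,u)$. Conventions: a black strand of thickness $0$ is the unit object and any merge, split or crossing involving a thickness-$0$ strand is an identity. Derived morphisms: $\omega_{a,0}:=1_a$;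 $\omega_{a,r}:=M_{r,a-r}(\omega_r\otimes1_{a-r})S_{r,a-r}$ for $1\le r\le a$; $\omega_{a,r}:=0$ if $r<0$ or $r>a$; $S^{(a)},M^{(a)}$ iterated splits/merges between $(a)$ and $(1,\dots,1)$; $g_r(u):=\sum_{i=0}^{r}(-1)^i\big(\prod_{j=0}^{i-1}(u+j)\big)\omega_{r,r-i}$. Defining relations, for all $a,b,c,d,r\ge1$, $u\in\Bbbk$: (R1) $M_{a+b,c}(M_{a,b}\otimes1_c)=M_{a,b+c}(1_a\otimes M_{b,c})$, $(S_{a,b}\otimes1_c)S_{a+b,c}=(1_a\otimes S_{b,c})S_{a,b+c}$; (R2) if $a+c=b+d$: $S_{b,d}M_{a,c}=\sum(M_{s,c-t}\otimes M_{a-s,t})(1_s\otimes X_{a-s,c-t}\otimes1_t)(S_{s,a-s}\otimes S_{c-t,t})$ over $0\le s\le\min(a,b)$, $0\le t\le\min(c,d)$, $t-s=d-a$; (R3) $M_{a,b}S_{a,b}=\binom{a+b}{a}1_{a+b}$; (R4) $(\omega_b\otimes1_a)X_{a,b}=\sum_{t=0}^{\min(a,b)}t!\,(M_{t,b-t}\otimes M_{a-t,t})(1_t\otimes X_{a-t,b-t}\otimes1_t)(1_t\otimes1_{a-t}\otimes\omega_{b-t}\otimes1_t)(S_{t,a-t}\otimes S_{b-t,t})$ and $X_{b,a}(\omega_b\otimes1_a)=\sum_{t=0}^{\min(a,b)}t!\,(M_{t,a-t}\otimes M_{b-t,t})(1_t\otimes1_{a-t}\otimes\omega_{b-t}\otimes1_t)(1_t\otimes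 X_{b-t,a-t}\otimes1_t)(S_{t,b-t}\otimes S_{a-t,t})$; (R5) $S_{a,b}\omega_{a+b}=(\omega_a\otimes\omega_b)S_{a,b}$, $\omega_{a+b}M_{a,b}=M_{a,b}(\omega_a\otimes\omega_b)$; (R6) $M^{(a)}(\omega_1\otimes\cdots\otimes\omega_1)S^{(a)}=a!\,\omega_a$; (R7) $D_{u,r}U_{r,u}=g_r(u)\otimes1_u$, $U_{r,u}D_{u,r}=1_u\otimes g_r(u)$; (R8) $(D_{u,b}\otimes1_a)(1_u\otimes X_{a,b})(U_{a,u}\otimes1_b)=(1_b\otimes U_{a,u})(X_{a,b}\otimes1_u)(1_a\otimes D_{u,b})+\sum_{t=1}^{\min(a,b)}t!\,(M_{t,b-t}\otimes1_u\otimes M_{a-t,t})(1_t\otimes1_{b-t}\otimes U_{a-t,u}\otimes1_t)(1_t\otimes X_{a-t,b-t}\otimes1_u\otimes1_t)(1_t\otimes1_{a-t}\otimes D_{u,b-t}\otimes1_t)(S_{t,a-t}\otimes1_u\otimes S_{b-t,t})$; (R9) $(1_u\otimes S_{b,c})U_{b+c,u}=(U_{b,u}\otimes1_c)(1_b\otimes U_{c,u})(S_{b,c}\otimes1_u)$, $(S_{a,b}\otimes1_u)D_{u,a+b}=(1_a\otimes D_{u,b})(D_{u,a}\otimes1_b)(1_u\otimes S_{a,b})$, $D_{u,b+c}(1_u\otimes M_{b,c})=(M_{b,c}\otimes1_u)(1_b\otimes D_{u,c})(D_{u,b}\otimes1_c)$, $U_{a+b,u}(M_{a,b}\otimes1_u)=(1_u\otimes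 M_{a,b})(U_{a,u}\otimes1_b)(1_a\otimes U_{b,u})$. Cyclotomic Schur category: fix $\ell\ge1$ and $\mathbf u=(u_1,\dots,u_\ell)\in\Bbbk^\ell$. A strict $(1+\ell)$-multicomposition is a tuple $\lambda=(\lambda^{(0)},\dots,\lambda^{(\ell)})$ of (possibly empty) finite sequences of positive integers; let $w(\lambda):=\lambda^{(0)}\,u_1\,\lambda^{(1)}\,u_2\cdots u_\ell\,\lambda^{(\ell)}$ (an object of $\mathcal{AS}$). The cyclotomic Schur category $\mathcal{S}chur_{\mathbf u}$ is the $\Bbbk$-linear category whose objects are the strict $(1+\ell)$-multicompositions, with $\mathrm{Hom}_{\mathcal{S}chur_{\mathbf u}}(\mu,\lambda)$ the quotient of $\mathrm{Hom}_{\mathcal{AS}}(w(\mu),w(\lambda))$ by the span of all morphisms factoring through an object $w(\gamma)$ with $\gamma^{(0)}\ne\emptyset$ (i.e. the relations of $\mathcal{AS}$ together with $1_\gamma=0$ whenever $\gamma^{(0)}\neq\emptyset$), composition induced from $\mathcal{AS}$. *)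

(* Affine Schur category AS presented by generators and
   relations, as a syntactic (untyped) term language + typing judgement +
   the congruence generated by the axioms of a strict k-linear monoidal
   category and the relations (R1)-(R9); and the cyclotomic quotient. *)
From mathcomp Require Import all_boot all_algebra.
Set Implicit Arguments. Unset Strict Implicit. Unset Printing Implicit Defensive.
Import GRing.Theory.
Local Open Scope ring_scope.

(* letters of words: black strands of thickness a (a >= 1 for genuine
   objects), red strands labelled u *)
Inductive letter (R : Type) := Blk of nat | Red of R.
Arguments Blk {R} _.
Arguments Red {R} _.

(* raw morphism terms.  Comp f g = f o g (g first). *)
Inductive term (R : Type) :=
| Id of seq (letter R)
| Comp of term R & term R
| Tens of term R & term R
| Zero of seq (letter R) & seq (letter R)
| Add of term R & term R
| Scale of R & term R
| Merge of nat & nat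
| Split of nat & nat
| Cross of nat & nat
| Dot of nat
| Up of nat & R
| Down of R & nat.
Arguments Id {R} _.
Arguments Zero {R} _ _.
Arguments Merge {R} _ _.
Arguments Split {R} _ _.
Arguments Cross {R} _ _.
Arguments Dot {R} _.

Inductive typed (R : Type) : term R -> seq (letter R) -> seq (letter R) -> Prop :=
| tyId w : typed (Id w) w w
| tyComp f g s m t : typed g s m -> typed f m t -> typed (Comp f g) s t
| tyTens f g s1 t1 s2 t2 : typed f s1 t1 -> typed g s2 t2 ->
    typed (Tens f g) (s1 ++ s2) (t1 ++ t2)
| tyZero s t : typed (Zero s t) s t
| tyAdd f g s t : typed f s t -> typed g s t -> typed (Add f g) s t
| tyScale c f s t : typed f s t -> typed (Scale c f) s t
| tyMerge a b : (0 < a)%N -> (0 < b)%N ->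
    typed (Merge a b) [:: Blk a; Blk b] [:: Blk (a + b)]
| tySplit a b : (0 < a)%N -> (0 < b)%N ->
    typed (Split a b) [:: Blk (a + b)] [:: Blk a; Blk b]
| tyCross a b : (0 < a)%N -> (0 < b)%N ->
    typed (Cross a b) [:: Blk a; Blk b] [:: Blk b; Blk a]
| tyDot a : (0 < a)%N -> typed (Dot a) [:: Blk a] [:: Blk a]
| tyUp a u : (0 < a)%N -> typed (Up a u) [:: Blk a; Red u] [:: Red u; Blk a]
| tyDown u a : (0 < a)%N -> typed (Down u a) [:: Red u; Blk a] [:: Blk a; Red u].

Section Derived.
Variable R : comPzRingType.
Local Notation term := (term R).
Local Notation word := (seq (letter R)).

(* thickness-0 strand = unit object *)
Definition blk (a : nat) : word := if a == 0%N then [::] else [:: Blk a].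
Definition idb (a : nat) : term := Id (blk a).

Definition mergeT (a b : nat) : term :=
  if (a == 0%N) || (b == 0%N) then Id (blk (a + b)) else Merge a b.
Definition splitT (a b : nat) : term :=
  if (a == 0%N) || (b == 0%N) then Id (blk (a + b)) else Split a b.
Definition crossT (a b : nat) : term :=
  if (a == 0%N) || (b == 0%N) then Id (blk a ++ blk b) else Cross a b.
Definition dotT (a : nat) : term := if a == 0%N then Id [::] else Dot a.
Definition upT (a : nat) (u : R) : term :=
  if a == 0%N then Id [:: Red u] else Up a u.
Definition downT (u : R) (a : nat) : term :=
  if a == 0%N then Id [:: Red u] else Down u a.

Definition tsum (s t : word) (l : seq term) : term := foldr (@Add R) (Zero s t) l.

Definition omega (a r : nat) : term :=
  if r == 0%N then idb a
  else if (a < r)%N then Zero (blk a) (blk a)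
  else Comp (mergeT r (a - r)) (Comp (Tens (dotT r) (idb (a - r))) (splitT r (a - r))).

Definition gpoly (r : nat) (u : R) : term :=
  tsum (blk r) (blk r)
    [seq Scale ((-1) ^+ i * \prod_(j < i) (u + j%:R)) (omega r (r - i)) | i <- iota 0 r.+1].

Fixpoint splitn (a : nat) : term :=
  match a with
  | 0 => Id [::]
  | 1 => Id [:: Blk 1]
  | n.+1 => Comp (Tens (Id [:: Blk 1]) (splitn n)) (splitT 1 n)
  end.
Fixpoint mergen (a : nat) : term :=
  match a with
  | 0 => Id [::]
  | 1 => Id [:: Blk 1]
  | n.+1 => Comp (mergeT 1 n) (Tens (Id [:: Blk 1]) (mergen n))
  end.
Fixpoint dots1 (a : nat) : term :=
  match a with
  | 0 => Id [::]
  | n.+1 => Tens (Dot 1) (dots1 n)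
  end.

Definition R2sum (a b c d : nat) : term :=
  tsum [:: Blk a; Blk c] [:: Blk b; Blk d]
   [seq Comp (Tens (mergeT p.1 (c - p.2)) (mergeT (a - p.1) p.2))
        (Comp (Tens (idb p.1) (Tens (crossT (a - p.1) (c - p.2)) (idb p.2)))
              (Tens (splitT p.1 (a - p.1)) (splitT (c - p.2) p.2)))
   | p <- [seq p <- allpairs pair (iota 0 (minn a b).+1) (iota 0 (minn c d).+1)
           | (p.2 + a == p.1 + d)%N]].

Definition R4sumL (a b : nat) : term :=
  tsum [:: Blk a; Blk b] [:: Blk b; Blk a]
   [seq Scale (t`!)%:R
      (Comp (Tens (mergeT t (b - t)) (mergeT (a - t) t))
      (Comp (Tens (idb t) (Tens (crossT (a - t) (b - t)) (idb t)))
      (Comp (Tens (idb t) (Tens (idb (a - t)) (Tens (dotT (b - t)) (idb t))))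
            (Tens (splitT t (a - t)) (splitT (b - t) t)))))
   | t <- iota 0 (minn a b).+1].

Definition R4sumR (a b : nat) : term :=
  tsum [:: Blk b; Blk a] [:: Blk a; Blk b]
   [seq Scale (t`!)%:R
      (Comp (Tens (mergeT t (a - t)) (mergeT (b - t) t))
      (Comp (Tens (idb t) (Tens (idb (a - t)) (Tens (dotT (b - t)) (idb t))))
      (Comp (Tens (idb t) (Tens (crossT (b - t) (a - t)) (idb t)))
            (Tens (splitT t (b - t)) (splitT (a - t) t)))))
   | t <- iota 0 (minn a b).+1].

Definition R8sum (a b : nat) (u : R) : term :=
  tsum [:: Blk a; Red u; Blk b] [:: Blk b; Red u; Blk a]
   [seq Scale (t`!)%:R
      (Comp (Tens (mergeT t (b - t)) (Tens (Id [:: Red u]) (mergeT (a - t) t)))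
      (Comp (Tens (idb t) (Tens (idb (b - t)) (Tens (upT (a - t) u) (idb t))))
      (Comp (Tens (idb t) (Tens (crossT (a - t) (b - t)) (Tens (Id [:: Red u]) (idb t))))
      (Comp (Tens (idb t) (Tens (idb (a - t)) (Tens (downT u (b - t)) (idb t))))
            (Tens (splitT t (a - t)) (Tens (Id [:: Red u]) (splitT (b - t) t)))))))
   | t <- iota 1 (minn a b)].

Inductive eqv : term -> term -> Prop :=
| e_refl f : eqv f f
| e_sym f g : eqv f g -> eqv g f
| e_trans f g h : eqv f g -> eqv g h -> eqv f h
| e_comp f f' g g' : eqv f f' -> eqv g g' -> eqv (Comp f g) (Comp f' g')
| e_tens f f' g g' : eqv f f' -> eqv g g' -> eqv (Tens f g) (Tens f' g')
| e_add f f' g g' : eqv f f' -> eqv g g' -> eqv (Add f g) (Add f' g')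
| e_scale c f f' : eqv f f' -> eqv (Scale c f) (Scale c f')
| e_idl f s t : typed f s t -> eqv (Comp (Id t) f) f
| e_idr f s t : typed f s t -> eqv (Comp f (Id s)) f
| e_cassoc f g h s m1 m2 t : typed h s m1 -> typed g m1 m2 -> typed f m2 t ->
    eqv (Comp (Comp f g) h) (Comp f (Comp g h))
| e_tid s t : eqv (Tens (Id s) (Id t)) (Id (s ++ t))
| e_tunitl f s t : typed f s t -> eqv (Tens (Id [::]) f) f
| e_tunitr f s t : typed f s t -> eqv (Tens f (Id [::])) f
| e_tassoc f g h s1 t1 s2 t2 s3 t3 :
    typed f s1 t1 -> typed g s2 t2 -> typed h s3 t3 ->
    eqv (Tens (Tens f g) h) (Tens f (Tens g h))
| e_interchange f f' g g' s1 m1 t1 s2 m2 t2 :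
    typed f' s1 m1 -> typed f m1 t1 -> typed g' s2 m2 -> typed g m2 t2 ->
    eqv (Tens (Comp f f') (Comp g g')) (Comp (Tens f g) (Tens f' g'))
| e_addC f g s t : typed f s t -> typed g s t -> eqv (Add f g) (Add g f)
| e_addA f g h s t : typed f s t -> typed g s t -> typed h s t ->
    eqv (Add (Add f g) h) (Add f (Add g h))
| e_add0 f s t : typed f s t -> eqv (Add f (Zero s t)) f
| e_scale1 f s t : typed f s t -> eqv (Scale 1 f) f
| e_scale0 f s t : typed f s t -> eqv (Scale 0 f) (Zero s t)
| e_scaleA c d f s t : typed f s t -> eqv (Scale c (Scale d f)) (Scale (c * d) f)
| e_scaleDl c d f s t : typed f s t ->
    eqv (Scale (c + d) f) (Add (Scale c f) (Scale d f))
| e_scaleDr c f g s t : typed f s t -> typed g s t ->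
    eqv (Scale c (Add f g)) (Add (Scale c f) (Scale c g))
| e_compDl f g h s m t : typed h s m -> typed f m t -> typed g m t ->
    eqv (Comp (Add f g) h) (Add (Comp f h) (Comp g h))
| e_compDr f g h s m t : typed g s m -> typed h s m -> typed f m t ->
    eqv (Comp f (Add g h)) (Add (Comp f g) (Comp f h))
| e_compZl c f g s m t : typed g s m -> typed f m t ->
    eqv (Comp (Scale c f) g) (Scale c (Comp f g))
| e_compZr c f g s m t : typed g s m -> typed f m t ->
    eqv (Comp f (Scale c g)) (Scale c (Comp f g))
| e_tensDl f g h s1 t1 s2 t2 : typed f s1 t1 -> typed g s1 t1 -> typed h s2 t2 ->
    eqv (Tens (Add f g) h) (Add (Tens f h) (Tens g h))
| e_tensDr f g h s1 t1 s2 t2 : typed f s1 t1 -> typed g s2 t2 -> typed h s2 t2 ->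
    eqv (Tens f (Add g h)) (Add (Tens f g) (Tens f h))
| e_tensZl c f g s1 t1 s2 t2 : typed f s1 t1 -> typed g s2 t2 ->
    eqv (Tens (Scale c f) g) (Scale c (Tens f g))
| e_tensZr c f g s1 t1 s2 t2 : typed f s1 t1 -> typed g s2 t2 ->
    eqv (Tens f (Scale c g)) (Scale c (Tens f g))
| e_R1m a b c : (0 < a)%N -> (0 < b)%N -> (0 < c)%N ->
    eqv (Comp (mergeT (a + b) c) (Tens (mergeT a b) (idb c)))
        (Comp (mergeT a (b + c)) (Tens (idb a) (mergeT b c)))
| e_R1s a b c : (0 < a)%N -> (0 < b)%N -> (0 < c)%N ->
    eqv (Comp (Tens (splitT a b) (idb c)) (splitT (a + b) c))
        (Comp (Tens (idb a) (splitT b c)) (splitT a (b + c)))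
| e_R2 a b c d : (0 < a)%N -> (0 < b)%N -> (0 < c)%N -> (0 < d)%N ->
    (a + c = b + d)%N ->
    eqv (Comp (splitT b d) (mergeT a c)) (R2sum a b c d)
| e_R3 a b : (0 < a)%N -> (0 < b)%N ->
    eqv (Comp (mergeT a b) (splitT a b)) (Scale ('C(a + b, a))%:R (idb (a + b)))
| e_R4l a b : (0 < a)%N -> (0 < b)%N ->
    eqv (Comp (Tens (dotT b) (idb a)) (crossT a b)) (R4sumL a b)
| e_R4r a b : (0 < a)%N -> (0 < b)%N ->
    eqv (Comp (crossT b a) (Tens (dotT b) (idb a))) (R4sumR a b)
| e_R5s a b : (0 < a)%N -> (0 < b)%N ->
    eqv (Comp (splitT a b) (dotT (a + b))) (Comp (Tens (dotT a) (dotT b)) (splitT a b))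
| e_R5m a b : (0 < a)%N -> (0 < b)%N ->
    eqv (Comp (dotT (a + b)) (mergeT a b)) (Comp (mergeT a b) (Tens (dotT a) (dotT b)))
| e_R6 a : (0 < a)%N ->
    eqv (Comp (mergen a) (Comp (dots1 a) (splitn a))) (Scale (a`!)%:R (dotT a))
| e_R7du r u : (0 < r)%N ->
    eqv (Comp (downT u r) (upT r u)) (Tens (gpoly r u) (Id [:: Red u]))
| e_R7ud r u : (0 < r)%N ->
    eqv (Comp (upT r u) (downT u r)) (Tens (Id [:: Red u]) (gpoly r u))
| e_R8 a b u : (0 < a)%N -> (0 < b)%N ->
    eqv (Comp (Tens (downT u b) (idb a)) (Comp (Tens (Id [:: Red u]) (crossT a b))
                                               (Tens (upT a u) (idb b))))
        (Add (Comp (Tens (idb b) (upT a u)) (Comp (Tens (crossT a b) (Id [:: Red u]))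
                                                  (Tens (idb a) (downT u b))))
             (R8sum a b u))
| e_R9a b c u : (0 < b)%N -> (0 < c)%N ->
    eqv (Comp (Tens (Id [:: Red u]) (splitT b c)) (upT (b + c) u))
        (Comp (Tens (upT b u) (idb c)) (Comp (Tens (idb b) (upT c u))
                                             (Tens (splitT b c) (Id [:: Red u]))))
| e_R9b a b u : (0 < a)%N -> (0 < b)%N ->
    eqv (Comp (Tens (splitT a b) (Id [:: Red u])) (downT u (a + b)))
        (Comp (Tens (idb a) (downT u b)) (Comp (Tens (downT u a) (idb b))
                                               (Tens (Id [:: Red u]) (splitT a b))))
| e_R9c b c u : (0 < b)%N -> (0 < c)%N ->
    eqv (Comp (downT u (b + c)) (Tens (Id [:: Red u]) (mergeT b c)))
        (Comp (Tens (mergeT b c) (Id [:: Red u])) (Comp (Tens (idb b) (downT u c))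
                                                        (Tens (downT u b) (idb c))))
| e_R9d a b u : (0 < a)%N -> (0 < b)%N ->
    eqv (Comp (upT (a + b) u) (Tens (mergeT a b) (Id [:: Red u])))
        (Comp (Tens (Id [:: Red u]) (mergeT a b)) (Comp (Tens (upT a u) (idb b))
                                                        (Tens (idb a) (upT b u)))).

Definition strict_multicomp (l : nat) (lam : seq (seq nat)) : Prop :=
  size lam = l.+1 /\ all (all (fun a => (0 < a)%N)) lam.

Definition wword (u : seq R) (lam : seq (seq nat)) : word :=
  match lam with
  | [::] => [::]
  | l0 :: ls => map Blk l0 ++ flatten [seq Red p.1 :: map Blk p.2 | p <- zip u ls]
  end.

Definition bad_word (l : nat) (u : seq R) (w : word) : Prop :=
  exists gam, strict_multicomp l gam /\ nth [::] gam 0 <> [::] /\ w = wword u gam.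

Inductive in_cyc_ideal (l : nat) (u : seq R) (s : word) : term -> Prop :=
| ci_zero : in_cyc_ideal l u s (Zero s s)
| ci_add w a b h : bad_word l u w -> typed b s w -> typed a w s ->
    in_cyc_ideal l u s h -> in_cyc_ideal l u s (Add (Comp a b) h).

(* f : s -> s (s = w(gamma)) has zero image in End_{Schur_u}(gamma) *)
Definition cyc_zero (l : nat) (u : seq R) (s : word) (f : term) : Prop :=
  exists h, in_cyc_ideal l u s h /\ eqv f h.

Definition g_ri (r : nat) (u : seq R) (i : nat) : term :=
  foldr (fun x acc => Comp (gpoly r x) acc) (idb r) (take i u).

End Derived.

(* Every endomorphism of a black strand built from dots, merges and splits
   commutes with the traverse-up U_{r,u}.  For omega_r this is a strong
   induction on r: by (R7), U_{r,u} (g_r(u) ⊗ 1_u) = U D U = (1_u ⊗ g_r(u)) U_{r,u},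
   and g_r(u) is omega_r plus multiples of omega_{r,k}, k < r, which commute with
   U_{r,u} by (R9) and induction.  Hence, since 1_{u_i} ⊗ g_r(u_i) = U_{r,u_i} D_{u_i,r},
   the factors g_r(u_i), ..., g_r(u_1) can be peeled off one at a time, and
   1_{u_1...u_i} ⊗ g_{r,i} ⊗ 1_y factors through (r, u_1, ..., u_i, y), which is
   w(gamma') for gamma' obtained from gamma by moving r into gamma^(0). *)

From Pilot Require Import Defs.
From mathcomp Require Import all_boot all_algebra.
From Stdlib Require Import Setoid.
From Stdlib Require List.
Set Implicit Arguments. Unset Strict Implicit. Unset Printing Implicit Defensive.

Section Typing.
Variable R : comPzRingType.
Local Notation term := (term R).
Local Notation word := (seq (letter R)).

Fixpoint src (f : term) : word :=
  match f with
  | Id w => w | Comp _ g => src g | Tens f g => src f ++ src g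
  | Zero s _ => s | Add f _ => src f | Scale _ f => src f
  | Merge a b => [:: Blk a; Blk b] | Defs.Split a b => [:: Blk (a + b)]
  | Cross a b => [:: Blk a; Blk b] | Defs.Dot a => [:: Blk a]
  | Up a u => [:: Blk a; Red u] | Down u a => [:: Red u; Blk a]
  end.

Fixpoint tgt (f : term) : word :=
  match f with
  | Id w => w | Comp f _ => tgt f | Tens f g => tgt f ++ tgt g
  | Zero _ t => t | Add f _ => tgt f | Scale _ f => tgt f
  | Merge a b => [:: Blk (a + b)] | Defs.Split a b => [:: Blk a; Blk b]
  | Cross a b => [:: Blk b; Blk a] | Defs.Dot a => [:: Blk a]
  | Up a u => [:: Red u; Blk a] | Down u a => [:: Blk a; Red u]
  end.

Fixpoint well_typed (f : term) : Prop :=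
  match f with
  | Id _ | Zero _ _ => True
  | Comp f g => [/\ well_typed f, well_typed g & src f = tgt g]
  | Tens f g => well_typed f /\ well_typed g
  | Add f g => [/\ well_typed f, well_typed g, src f = src g & tgt f = tgt g]
  | Scale _ f => well_typed f
  | Merge a b | Defs.Split a b | Cross a b => (0 < a)%N /\ (0 < b)%N
  | Defs.Dot a | Up a _ | Down _ a => (0 < a)%N
  end.

Lemma well_typedP f : well_typed f -> typed f (src f) (tgt f).
Proof.
elim: f => /=; try by [move=> *; constructor | move=> a b [Ha Hb]; constructor].
- move=> f IHf g IHg [/IHf Hf /IHg Hg E]; apply: tyComp Hg _; by rewrite -E.
- by move=> f IHf g IHg [/IHf Hf /IHg Hg]; constructor.
- move=> f IHf g IHg [/IHf Hf /IHg Hg E1 E2]; apply: tyAdd Hf _; by rewrite E1 E2.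
- by move=> c f IHf /IHf Hf; constructor.
Qed.

Lemma typedP f s t : typed f s t <-> [/\ well_typed f, src f = s & tgt f = t].
Proof.
split; last by case=> /well_typedP + <- <-.
elim=> //=; clear; intros;
  repeat match goal with H : [/\ _, _ & _] |- _ => case: H => ? ? ? end; subst; by split.
Qed.

End Typing.

Add Parametric Relation (R : comPzRingType) : (term R) (@eqv R)
  reflexivity proved by (@e_refl R)
  symmetry proved by (@e_sym R)
  transitivity proved by (@e_trans R) as eqv_rel.
Add Parametric Morphism (R : comPzRingType) : (@Comp R)
  with signature (@eqv R) ==> (@eqv R) ==> (@eqv R) as Comp_mor.
Proof. by move=> f f' Ef g g' Eg; apply: e_comp. Qed.
Add Parametric Morphism (R : comPzRingType) : (@Tens R)
  with signature (@eqv R) ==> (@eqv R) ==> (@eqv R) as Tens_mor.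
Proof. by move=> f f' Ef g g' Eg; apply: e_tens. Qed.
Add Parametric Morphism (R : comPzRingType) : (@Add R)
  with signature (@eqv R) ==> (@eqv R) ==> (@eqv R) as Add_mor.
Proof. by move=> f f' Ef g g' Eg; apply: e_add. Qed.
Add Parametric Morphism (R : comPzRingType) c : (@Scale R c)
  with signature (@eqv R) ==> (@eqv R) as Scale_mor.
Proof. exact: e_scale. Qed.

#[global] Hint Resolve e_refl : core.

Section Rules.
Variable R : comPzRingType.
Local Notation term := (term R).
Local Notation word := (seq (letter R)).
Implicit Types f g h : term.

Lemma comp_idl f w : w = tgt f -> well_typed f -> eqv (Comp (Id w) f) f.
Proof. by move=> -> /well_typedP; apply: e_idl. Qed.

Lemma comp_idr f w : w = src f -> well_typed f -> eqv (Comp f (Id w)) f.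
Proof. by move=> -> /well_typedP; apply: e_idr. Qed.

Lemma comp_assoc f g h : well_typed (Comp (Comp f g) h) ->
  eqv (Comp (Comp f g) h) (Comp f (Comp g h)).
Proof.
move=> /= [[/well_typedP Hf /well_typedP Hg E1] /well_typedP Hh E2].
apply: (e_cassoc Hh); [rewrite -E2; exact: Hg | rewrite -E1; exact: Hf].
Qed.

Lemma tens_ids (s t : word) : eqv (Tens (Id s) (Id t)) (Id (s ++ t)).
Proof. exact: e_tid. Qed.

Lemma tens_unitl f : well_typed f -> eqv (Tens (Id [::]) f) f.
Proof. by move/well_typedP; apply: e_tunitl. Qed.

Lemma tens_unitr f : well_typed f -> eqv (Tens f (Id [::])) f.
Proof. by move/well_typedP; apply: e_tunitr. Qed.

Lemma tens_assoc f g h : well_typed f -> well_typed g -> well_typed h ->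
  eqv (Tens (Tens f g) h) (Tens f (Tens g h)).
Proof. by move=> /well_typedP Hf /well_typedP Hg /well_typedP Hh; apply: e_tassoc Hf Hg Hh. Qed.

Lemma tens_comp f f' g g' : well_typed (Comp f f') -> well_typed (Comp g g') ->
  eqv (Tens (Comp f f') (Comp g g')) (Comp (Tens f g) (Tens f' g')).
Proof.
move=> /= [/well_typedP Hf /well_typedP Hf' E1] [/well_typedP Hg /well_typedP Hg' E2].
apply: (e_interchange Hf' _ Hg'); [rewrite -E1; exact: Hf | rewrite -E2; exact: Hg].
Qed.

Lemma add_assoc f g h : well_typed (Add (Add f g) h) ->
  eqv (Add (Add f g) h) (Add f (Add g h)).
Proof.
move=> /= [[/well_typedP Hf /well_typedP Hg E1 E2] /well_typedP Hh E3 E4].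
by apply: (e_addA Hf); [rewrite E1 E2 | rewrite E3 E4].
Qed.

Lemma add0 f s t : s = src f -> t = tgt f -> well_typed f -> eqv (Add f (Zero s t)) f.
Proof. by move=> -> -> /well_typedP; apply: e_add0. Qed.

Lemma scale1 f : well_typed f -> eqv (Scale 1%R f) f.
Proof. by move/well_typedP; apply: e_scale1. Qed.

Lemma scale0 f s t : s = src f -> t = tgt f -> well_typed f -> eqv (Scale 0%R f) (Zero s t).
Proof. by move=> -> -> /well_typedP; apply: e_scale0. Qed.

Lemma scaleDl c d f : well_typed f -> eqv (Scale (c + d)%R f) (Add (Scale c f) (Scale d f)).
Proof. by move/well_typedP; apply: e_scaleDl. Qed.

Lemma compDl f g h : well_typed (Comp (Add f g) h) ->
  eqv (Comp (Add f g) h) (Add (Comp f h) (Comp g h)).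
Proof.
move=> /= [[/well_typedP Hf /well_typedP Hg E1 E2] /well_typedP Hh E3].
apply: (e_compDl Hh); [rewrite -E3; exact: Hf | rewrite -E3 E1 E2; exact: Hg].
Qed.

Lemma compDr f g h : well_typed (Comp f (Add g h)) ->
  eqv (Comp f (Add g h)) (Add (Comp f g) (Comp f h)).
Proof.
move=> /= [/well_typedP Hf [/well_typedP Hg /well_typedP Hh E1 E2] E3].
apply: (e_compDr Hg); [rewrite E1 E2; exact: Hh | rewrite -E3; exact: Hf].
Qed.

Lemma compZl c f g : well_typed (Comp f g) -> eqv (Comp (Scale c f) g) (Scale c (Comp f g)).
Proof.
move=> /= [/well_typedP Hf /well_typedP Hg E].
apply: (e_compZl _ Hg); rewrite -E; exact: Hf.
Qed.

Lemma compZr c f g : well_typed (Comp f g) -> eqv (Comp f (Scale c g)) (Scale c (Comp f g)).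
Proof.
move=> /= [/well_typedP Hf /well_typedP Hg E].
apply: (e_compZr _ Hg); rewrite -E; exact: Hf.
Qed.

Lemma tensDl f g h : well_typed (Add f g) -> well_typed h ->
  eqv (Tens (Add f g) h) (Add (Tens f h) (Tens g h)).
Proof.
move=> /= [/well_typedP Hf /well_typedP Hg E1 E2] /well_typedP Hh.
by apply: e_tensDl Hf _ Hh; rewrite E1 E2.
Qed.

Lemma tensDr f g h : well_typed f -> well_typed (Add g h) ->
  eqv (Tens f (Add g h)) (Add (Tens f g) (Tens f h)).
Proof.
move=> /= /well_typedP Hf [/well_typedP Hg /well_typedP Hh E1 E2].
by apply: e_tensDr Hf Hg _; rewrite E1 E2.
Qed.

Lemma tensZl c f g : well_typed f -> well_typed g ->
  eqv (Tens (Scale c f) g) (Scale c (Tens f g)).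
Proof. by move=> /well_typedP Hf /well_typedP Hg; apply: e_tensZl Hf Hg. Qed.

Lemma tensZr c f g : well_typed f -> well_typed g ->
  eqv (Tens f (Scale c g)) (Scale c (Tens f g)).
Proof. by move=> /well_typedP Hf /well_typedP Hg; apply: e_tensZr Hf Hg. Qed.

End Rules.

Ltac typecheck :=
  cbn [well_typed src tgt cat];
  repeat match goal with
  | |- _ /\ _ => split | |- [/\ _, _ & _] => split | |- [/\ _, _, _ & _] => split
  | |- True => exact I
  end;
  repeat match goal with
  | H : src ?x = _ |- context [src ?x] => rewrite H
  | H : tgt ?x = _ |- context [tgt ?x] => rewrite H
  end;
  cbn [cat]; try done.

Section Basics.
Variable R : comPzRingType.
Local Notation term := (term R).
Local Notation word := (seq (letter R)).
Implicit Types f g h : term.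

Lemma blk_pos a : (0 < a)%N -> blk R a = [:: Blk a].
Proof. by case: a. Qed.
Lemma idb_pos a : (0 < a)%N -> idb R a = Id [:: Blk a].
Proof. by case: a. Qed.
Lemma mergeT_pos a b : (0 < a)%N -> (0 < b)%N -> mergeT R a b = Merge a b.
Proof. by case: a => //; case: b. Qed.
Lemma splitT_pos a b : (0 < a)%N -> (0 < b)%N -> splitT R a b = Defs.Split a b.
Proof. by case: a => //; case: b. Qed.
Lemma dotT_pos a : (0 < a)%N -> dotT R a = Defs.Dot a.
Proof. by case: a. Qed.
Lemma upT_pos a (u : R) : (0 < a)%N -> upT a u = Up a u.
Proof. by case: a. Qed.
Lemma downT_pos a (u : R) : (0 < a)%N -> downT u a = Down u a.
Proof. by case: a. Qed.

Lemma whiskerl_comp (w : word) f g : well_typed (Comp f g) ->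
  eqv (Tens (Id w) (Comp f g)) (Comp (Tens (Id w) f) (Tens (Id w) g)).
Proof.
move=> Hfg; rewrite -tens_comp //.
by apply: e_tens; [symmetry; apply: comp_idl | reflexivity].
Qed.

Lemma whiskerr_comp (w : word) f g : well_typed (Comp f g) ->
  eqv (Tens (Comp f g) (Id w)) (Comp (Tens f (Id w)) (Tens g (Id w))).
Proof.
move=> Hfg; rewrite -tens_comp //.
by apply: e_tens; [reflexivity | symmetry; apply: comp_idl].
Qed.

Lemma eqv_addIr f g f' g' : well_typed (Add f g) -> well_typed (Add f' g') ->
  eqv (Add f g) (Add f' g') -> eqv g g' -> eqv f f'.
Proof.
have addK h k : well_typed (Add h k) -> eqv h (Add (Add h k) (Scale (-1)%R k)).
  move=> /= [Hh Hk Es Et]; rewrite add_assoc; last by typecheck.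
  rewrite -{1}(scale1 Hk) -scaleDl // GRing.addrN scale0 // add0 //.
move=> Hfg Hfg' E Eg.
by rewrite (addK _ _ Hfg) (addK _ _ Hfg') E Eg.
Qed.

End Basics.

Lemma prop_in_cons (T : eqType) (P : T -> Prop) x s :
  {in x :: s, forall y, P y} -> P x /\ {in s, forall y, P y}.
Proof. by move=> Ps; split=> [|y ys]; apply: Ps; rewrite ?mem_head // in_cons ys orbT. Qed.

Section Naturality.
Variables (R : comPzRingType) (u : R).
Local Notation term := (term R).
Implicit Types f g h : term.

Definition endo (r : nat) f := [/\ well_typed f, src f = [:: Blk r] & tgt f = [:: Blk r]].

Definition up_natural (r : nat) f :=
  eqv (Comp (Up r u) (Tens f (Id [:: Red u]))) (Comp (Tens (Id [:: Red u]) f) (Up r u)).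

Lemma endo_comp r f g : endo r f -> endo r g -> endo r (Comp f g).
Proof. by move=> [Hf Sf Tf] [Hg Sg Tg]; rewrite /endo; typecheck. Qed.

Lemma endo_add r f g : endo r f -> endo r g -> endo r (Add f g).
Proof. by move=> [Hf Sf Tf] [Hg Sg Tg]; rewrite /endo; typecheck. Qed.

Lemma endo_scale r c f : endo r f -> endo r (Scale c f).
Proof. by move=> [Hf Sf Tf]; rewrite /endo; typecheck. Qed.

Lemma endo_tsum r (I : eqType) (F : I -> term) (s : seq I) :
  {in s, forall i, endo r (F i)} -> endo r (tsum [:: Blk r] [:: Blk r] (map F s)).
Proof.
elim: s => [|i s IH] /=; first by rewrite /endo; typecheck.
by case/prop_in_cons=> Ei /IH Es; apply: endo_add.
Qed.

Lemma up_natural_eqv r f f' : eqv f f' -> up_natural r f -> up_natural r f'.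
Proof. by move=> E; rewrite /up_natural E. Qed.

Lemma up_natural_id r : (0 < r)%N -> up_natural r (Id [:: Blk r]).
Proof. by move=> Hr; rewrite /up_natural !tens_ids /= comp_idr // comp_idl. Qed.

Lemma up_natural_comp r f g : (0 < r)%N -> endo r f -> endo r g ->
  up_natural r f -> up_natural r g -> up_natural r (Comp f g).
Proof.
move=> Hr [Hf Sf Tf] [Hg Sg Tg] Nf Ng; rewrite /up_natural.
rewrite whiskerr_comp; last by typecheck.
rewrite whiskerl_comp; last by typecheck.
rewrite -comp_assoc; last by typecheck.
rewrite Nf comp_assoc; last by typecheck.
by rewrite Ng -comp_assoc; typecheck.
Qed.

Lemma up_natural_add r f g : (0 < r)%N -> endo r f -> endo r g ->
  up_natural r f -> up_natural r g -> up_natural r (Add f g).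
Proof.
move=> Hr [Hf Sf Tf] [Hg Sg Tg] Nf Ng; rewrite /up_natural.
rewrite tensDl; [|by typecheck|by typecheck].
rewrite tensDr; [|by typecheck|by typecheck].
rewrite compDr; last by typecheck.
by rewrite compDl ?Nf ?Ng; typecheck.
Qed.

Lemma up_natural_scale r c f : (0 < r)%N -> endo r f ->
  up_natural r f -> up_natural r (Scale c f).
Proof.
move=> Hr [Hf Sf Tf] Nf; rewrite /up_natural.
rewrite tensZl // tensZr // compZr; last by typecheck.
by rewrite compZl ?Nf; typecheck.
Qed.

Lemma up_natural_zero r : (0 < r)%N -> up_natural r (Zero [:: Blk r] [:: Blk r]).
Proof.
move=> Hr; apply: (@up_natural_eqv _ (Scale 0%R (Id [:: Blk r]))); first exact: scale0.
by apply: up_natural_scale (up_natural_id Hr); rewrite /endo.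
Qed.

Lemma up_natural_tsum r (I : eqType) (F : I -> term) (s : seq I) : (0 < r)%N ->
  {in s, forall i, endo r (F i)} -> {in s, forall i, up_natural r (F i)} ->
  up_natural r (tsum [:: Blk r] [:: Blk r] (map F s)).
Proof.
move=> Hr; elim: s => [|i s IH] /=; first by move=> *; apply: up_natural_zero.
case/prop_in_cons=> Ei Es /prop_in_cons [Ni Ns].
by apply: up_natural_add => //; [apply: endo_tsum | apply: IH].
Qed.

Lemma up_natural_addIr r f g : (0 < r)%N -> endo r f -> endo r g ->
  up_natural r (Add f g) -> up_natural r g -> up_natural r f.
Proof.
move=> Hr [Hf Sf Tf] [Hg Sg Tg]; rewrite /up_natural => N Ng.
apply: (eqv_addIr (g := Comp (Up r u) (Tens g (Id [:: Red u])))
                  (g' := Comp (Tens (Id [:: Red u]) g) (Up r u))); try by typecheck.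
move: N; rewrite tensDl; try by typecheck.
rewrite tensDr; try by typecheck.
by rewrite compDr ?compDl; typecheck.
Qed.

End Naturality.

Section MergeSplit.
Variables (R : comPzRingType) (u : R).
Local Notation term := (term R).
Implicit Types f g h : term.

Definition up_pair a b : term :=
  Comp (Tens (Up a u) (Id [:: Blk b])) (Tens (Id [:: Blk a]) (Up b u)).

Lemma up_merge a b : (0 < a)%N -> (0 < b)%N ->
  eqv (Comp (Up (a + b) u) (Tens (Merge a b) (Id [:: Red u])))
      (Comp (Tens (Id [:: Red u]) (Merge a b)) (up_pair a b)).
Proof.
move=> Ha Hb; have := e_R9d u Ha Hb.
by rewrite upT_pos ?addn_gt0 ?Ha // mergeT_pos // !upT_pos // !idb_pos.
Qed.

Lemma split_up a b : (0 < a)%N -> (0 < b)%N ->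
  eqv (Comp (Tens (Id [:: Red u]) (Defs.Split a b)) (Up (a + b) u))
      (Comp (up_pair a b) (Tens (Defs.Split a b) (Id [:: Red u]))).
Proof.
move=> Ha Hb; have := e_R9a u Ha Hb.
rewrite upT_pos ?addn_gt0 ?Ha // splitT_pos // !upT_pos // !idb_pos // => ->.
by rewrite /up_pair comp_assoc; typecheck.
Qed.

Lemma up_pair_natural a b f g : (0 < a)%N -> (0 < b)%N -> endo a f -> endo b g ->
  up_natural u a f -> up_natural u b g ->
  eqv (Comp (up_pair a b) (Tens (Tens f g) (Id [:: Red u])))
      (Comp (Tens (Id [:: Red u]) (Tens f g)) (up_pair a b)).
Proof.
move=> Ha Hb [Hf Sf Tf] [Hg Sg Tg] Nf Ng.
have slide_b : eqv (Comp (Tens (Id [:: Blk a]) (Up b u)) (Tens (Tens f g) (Id [:: Red u])))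
                   (Comp (Tens f (Tens (Id [:: Red u]) g)) (Tens (Id [:: Blk a]) (Up b u))).
  rewrite tens_assoc // -!tens_comp; try by typecheck.
  by rewrite Ng comp_idl ?comp_idr.
have slide_a : eqv (Comp (Tens (Up a u) (Id [:: Blk b])) (Tens f (Tens (Id [:: Red u]) g)))
                   (Comp (Tens (Tens (Id [:: Red u]) f) g) (Tens (Up a u) (Id [:: Blk b]))).
  rewrite -tens_assoc // -!tens_comp; try by typecheck.
  by rewrite Nf comp_idl ?comp_idr.
rewrite /up_pair comp_assoc; last by typecheck.
rewrite slide_b -comp_assoc; last by typecheck.
by rewrite slide_a comp_assoc ?tens_assoc; typecheck.
Qed.

Lemma up_natural_merge_split a b f g : (0 < a)%N -> (0 < b)%N -> endo a f -> endo b g ->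
  up_natural u a f -> up_natural u b g ->
  up_natural u (a + b) (Comp (Merge a b) (Comp (Tens f g) (Defs.Split a b))).
Proof.
move=> Ha Hb Ef Eg Nf Ng; have [Hf Sf Tf] := Ef; have [Hg Sg Tg] := Eg.
have Hab : (0 < a + b)%N by rewrite addn_gt0 Ha.
rewrite /up_natural !whiskerr_comp ?whiskerl_comp; try by typecheck.
rewrite -comp_assoc; last by typecheck.
rewrite up_merge // comp_assoc; last by typecheck.
rewrite -(@comp_assoc _ (up_pair a b)); last by typecheck.
rewrite up_pair_natural // comp_assoc; last by typecheck.
rewrite -split_up // !comp_assoc; typecheck.
Qed.

End MergeSplit.

Section GPoly.
Variable R : comPzRingType.
Local Notation term := (term R).

Lemma omega_0 r : (0 < r)%N -> omega R r 0 = Id [:: Blk r].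
Proof. by move=> Hr; rewrite /omega idb_pos. Qed.

Lemma omega_mid r k : (0 < k)%N -> (k < r)%N ->
  omega R r k = Comp (Merge k (r - k))
    (Comp (Tens (Defs.Dot k) (Id [:: Blk (r - k)])) (Defs.Split k (r - k))).
Proof.
move=> Hk Hkr; have Hrk : (0 < r - k)%N by rewrite subn_gt0.
rewrite /omega (gtn_eqF Hk) ltnNge (ltnW Hkr) /=.
by rewrite mergeT_pos // splitT_pos // dotT_pos // idb_pos.
Qed.

Lemma omega_diag r : (0 < r)%N ->
  omega R r r = Comp (Id [:: Blk r]) (Comp (Tens (Defs.Dot r) (Id [::])) (Id [:: Blk r])).
Proof.
move=> Hr; rewrite /omega (gtn_eqF Hr) ltnn subnn /mergeT /splitT /dotT /idb /blk /=.
by rewrite orbT addn0 (gtn_eqF Hr).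
Qed.

Lemma omega_top r : (0 < r)%N -> eqv (omega R r r) (Defs.Dot r).
Proof. by move=> Hr; rewrite omega_diag // tens_unitr // comp_idl ?comp_idr. Qed.

Lemma endo_omega r k : (0 < r)%N -> (k <= r)%N -> endo r (omega R r k).
Proof.
move=> Hr Hkr; have [->|Hk] := posnP k; first by rewrite omega_0.
move: Hkr; rewrite leq_eqVlt => /predU1P [->|Hlt]; first by rewrite omega_diag // /endo; typecheck.
by rewrite omega_mid // /endo; typecheck; rewrite ?subn_gt0 ?subnKC // ltnW.
Qed.

Lemma up_natural_omega (u : R) r k : (0 < r)%N -> (k <= r)%N ->
  ((0 < k)%N -> up_natural u k (Defs.Dot k)) -> up_natural u r (omega R r k).
Proof.
move=> Hr Hkr Nk; have [->|Hk] := posnP k; first by rewrite omega_0 //; apply: up_natural_id.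
move: Hkr; rewrite leq_eqVlt => /predU1P [Ekr|Hlt].
  by rewrite -Ekr; apply: up_natural_eqv (Nk Hk); symmetry; apply: omega_top.
have Hrk : (0 < r - k)%N by rewrite subn_gt0.
rewrite omega_mid //.
have Ed : endo k (Defs.Dot k : term) by [].
have Ei : endo (r - k) (Id [:: Blk (r - k)] : term) by [].
have := up_natural_merge_split Hk Hrk Ed Ei (Nk Hk) (up_natural_id u Hrk).
by rewrite subnKC // ltnW.
Qed.

Definition gpoly_tail r (v : R) : term :=
  tsum [:: Blk r] [:: Blk r]
    [seq Scale ((-1) ^+ i * \prod_(j < i) (v + j%:R))%R (omega R r (r - i)) | i <- iota 1 r].

Lemma gpoly_split r (v : R) : (0 < r)%N ->
  gpoly r v = Add (Scale 1%R (omega R r r)) (gpoly_tail r v).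
Proof. by move=> Hr; rewrite /gpoly blk_pos //= GRing.expr0 big_ord0 GRing.mulr1 subn0. Qed.

Lemma endo_gpoly_tail r (v : R) : (0 < r)%N -> endo r (gpoly_tail r v).
Proof. by move=> Hr; apply: endo_tsum => i _; apply/endo_scale/endo_omega; rewrite ?leq_subr. Qed.

Lemma endo_gpoly r (v : R) : (0 < r)%N -> endo r (gpoly r v).
Proof.
move=> Hr; rewrite gpoly_split //.
by apply/endo_add/endo_gpoly_tail/Hr/endo_scale/endo_omega.
Qed.

Lemma gpolyE r (v : R) : (0 < r)%N -> eqv (gpoly r v) (Add (Defs.Dot r) (gpoly_tail r v)).
Proof.
move=> Hr; have [Ho _ _] := endo_omega Hr (leqnn r).
by rewrite gpoly_split // scale1 // omega_top.
Qed.

Lemma up_natural_gpoly_tail (u : R) r (v : R) : (0 < r)%N ->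
  (forall j, (0 < j)%N -> (j < r)%N -> up_natural u j (Defs.Dot j)) ->
  up_natural u r (gpoly_tail r v).
Proof.
move=> Hr Nlt; apply: up_natural_tsum => // i; rewrite mem_iota => /andP [Hi _].
  by apply/endo_scale/endo_omega; rewrite ?leq_subr.
apply/up_natural_scale/up_natural_omega; rewrite ?leq_subr //.
  by apply: endo_omega; rewrite ?leq_subr.
by move=> Hri; apply: Nlt; rewrite // ltn_subrL Hi.
Qed.

Lemma up_natural_gpoly_self (u : R) r : (0 < r)%N -> up_natural u r (gpoly r u).
Proof.
move=> Hr; have [Hg Sg Tg] := endo_gpoly u Hr.
have E1 := e_R7du u Hr; have E2 := e_R7ud u Hr.
rewrite upT_pos // downT_pos // in E1 E2.
by rewrite /up_natural -E1 -comp_assoc ?E2; typecheck.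
Qed.

Lemma up_natural_dot (u : R) r : (0 < r)%N -> up_natural u r (Defs.Dot r).
Proof.
elim/ltn_ind: r => r IH Hr.
have Nt := up_natural_gpoly_tail u Hr (fun j Hj Hjr => IH j Hjr Hj).
apply: (up_natural_addIr Hr _ (endo_gpoly_tail u Hr) _ Nt); first by [].
apply: up_natural_eqv (up_natural_gpoly_self u Hr).
exact: gpolyE.
Qed.

Lemma up_natural_gpoly (u : R) r (v : R) : (0 < r)%N -> up_natural u r (gpoly r v).
Proof.
move=> Hr; apply: up_natural_eqv; first by symmetry; apply: gpolyE.
apply: up_natural_add => //; [exact: endo_gpoly_tail | exact: up_natural_dot |].
by apply: up_natural_gpoly_tail => // j Hj _; apply: up_natural_dot.
Qed.

End GPoly.

Section Factorisation.
Variables (R : comPzRingType) (r : nat).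
Hypothesis r_gt0 : (0 < r)%N.
Local Notation term := (term R).
Local Notation word := (seq (letter R)).

Definition gprod (vs : seq R) : term :=
  foldr (fun v acc => Comp (gpoly r v) acc) (idb R r) vs.

Lemma endo_gprod vs : endo r (gprod vs).
Proof.
elim: vs => [|v vs IH] /=; first by rewrite idb_pos.
exact/endo_comp/IH/endo_gpoly.
Qed.

Lemma up_natural_gprod u vs : up_natural u r (gprod vs).
Proof.
elim: vs => [|v vs IH] /=; first by rewrite idb_pos //; apply: up_natural_id.
apply: up_natural_comp => //; [exact: endo_gpoly | exact: endo_gprod | exact: up_natural_gpoly].
Qed.

Lemma gprod_rcons vs v : eqv (gprod (rcons vs v)) (Comp (gprod vs) (gpoly r v)).
Proof.
have [Hg Sg Tg] := endo_gpoly v r_gt0.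
elim: vs => [|x vs IH] /=; first by rewrite idb_pos // comp_idr // comp_idl.
have [Hl Sl Tl] := endo_gprod vs; have [Hx Sx Tx] := endo_gpoly x r_gt0.
by rewrite IH comp_assoc //; typecheck.
Qed.

Lemma gprod_rcons_peel vs v y :
  eqv (Tens (Id (map Red vs ++ [:: Red v])) (Tens (gprod (rcons vs v)) (Id y)))
      (Comp (Tens (Id (map Red vs)) (Tens (Up r v) (Id y)))
        (Comp (Tens (Id (map Red vs)) (Tens (gprod vs) (Id (Red v :: y))))
              (Tens (Id (map Red vs)) (Tens (Down v r) (Id y))))).
Proof.
have [Hg Sg Tg] := endo_gpoly v r_gt0; have [HG SG TG] := endo_gprod vs.
have [HG' _ _] := endo_gprod (rcons vs v).
have R7 := e_R7ud v r_gt0; rewrite upT_pos // downT_pos // in R7.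
rewrite -tens_ids tens_assoc //.
rewrite gprod_rcons -(@tens_assoc _ (Id [:: Red v])); try by typecheck.
rewrite whiskerl_comp; last by typecheck.
rewrite -R7 -comp_assoc; last by typecheck.
rewrite -(up_natural_gprod v vs) comp_assoc; last by typecheck.
rewrite !whiskerr_comp; try by typecheck.
rewrite !whiskerl_comp; try by typecheck.
by rewrite tens_assoc ?tens_ids; typecheck.
Qed.

Definition factors_through (f : term) (s w : word) :=
  exists A B, [/\ typed B s w, typed A w s & eqv f (Comp A B)].

Lemma gprod_factors vs y :
  factors_through (Tens (Id (map Red vs)) (Tens (gprod vs) (Id y)))
    (map Red vs ++ Blk r :: y) (Blk r :: map Red vs ++ y).
Proof.
elim/last_ind: vs y => [|vs v IH] y.
  exists (Id (Blk r :: y)), (Id (Blk r :: y)); split; try constructor.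
  by rewrite /= idb_pos // tens_unitl // tens_ids comp_idl.
have [A [B [tyB tyA EAB]]] := IH (Red v :: y).
have [HA SA TA] := (typedP A _ _).1 tyA; have [HB SB TB] := (typedP B _ _).1 tyB.
exists (Comp (Tens (Id (map Red vs)) (Tens (Up r v) (Id y))) A).
exists (Comp B (Tens (Id (map Red vs)) (Tens (Down v r) (Id y)))).
rewrite map_rcons -cats1 -!catA; split; try by apply/typedP; typecheck.
rewrite gprod_rcons_peel EAB -comp_assoc; last by typecheck.
by rewrite -comp_assoc ?comp_assoc; typecheck.
Qed.

End Factorisation.

Section Words.
Variable R : comPzRingType.
Local Notation word := (seq (letter R)).

Definition red_blocks (vs : seq R) (gs : seq (seq nat)) : word :=
  flatten [seq Red p.1 :: map Blk p.2 | p <- zip vs gs].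

Lemma wword_cons (vs : seq R) g gs : wword vs (g :: gs) = map Blk g ++ red_blocks vs gs.
Proof. by []. Qed.

Lemma red_blocks_nseq k vs g gs : (k < size vs)%N ->
  red_blocks vs (nseq k [::] ++ g :: gs) =
  map Red (take k.+1 vs) ++ map Blk g ++ red_blocks (drop k.+1 vs) gs.
Proof.
elim: k vs => [|k IH] [|v vs] //= Hk; first by rewrite take0 drop0.
by rewrite /red_blocks /= -/(red_blocks _ _) IH.
Qed.

Lemma nil_prefixE (T : Type) (s : seq (seq T)) i : (i < size s)%N ->
  (forall j, (j < i)%N -> nth [::] s j = [::]) ->
  s = nseq i [::] ++ nth [::] s i :: drop i.+1 s.
Proof.
move=> Hi Hnil; rewrite -(drop_nth [::] Hi) -{1}(cat_take_drop i s); congr (_ ++ _).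
apply: (@eq_from_nth _ [::]) => [|j]; rewrite size_take Hi ?size_nseq // => Hj.
by rewrite nth_take // nth_nseq Hj Hnil.
Qed.

Lemma bad_word_pull_left l (u : seq R) gam i r (y : word) :
  size u = l -> (0 < i)%N -> (i <= l)%N -> strict_multicomp l gam ->
  (forall j, (j < i)%N -> nth [::] gam j = [::]) ->
  (exists rest, nth [::] gam i = r :: rest) ->
  wword u gam = map Red (take i u) ++ Blk r :: y ->
  bad_word l u (Blk r :: map Red (take i u) ++ y).
Proof.
case: i => // k Hu _ Hkl [Hsz Hpos] Hnil [rest Hrest].
have Hk : (k < size u)%N by rewrite Hu.
have Egam := nil_prefixE (_ : k.+1 < size gam)%N Hnil.
rewrite Hrest Hsz ltnS in Egam; move: Egam => /(_ Hkl) Egam.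
set gs := drop k.+2 gam in Egam; clearbody gs.
rewrite Egam cat_cons wword_cons red_blocks_nseq // => /List.app_inv_head [<-].
exists ([:: r] :: (nseq k [::] ++ rest :: gs)); split; last first.
  by split=> //; rewrite wword_cons red_blocks_nseq.
split; first by rewrite -Hsz Egam /= !size_cat.
move: Hpos; rewrite Egam /= !all_cat /= => /and3P [-> /andP [-> ->] ->].
by rewrite andbT.
Qed.

End Words.

Lemma cyc_zero_factors (R : comPzRingType) l (u : seq R) s w f :
  bad_word l u w -> factors_through f s w -> cyc_zero l u s f.
Proof.
move=> bad_w [A [B [tyB tyA EAB]]].
exists (Add (Comp A B) (Zero s s)); split; first exact: ci_add bad_w tyB tyA (ci_zero _ _ _).
have [HA SA TA] := (typedP A _ _).1 tyA; have [HB SB TB] := (typedP B _ _).1 tyB.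
by rewrite add0 //; typecheck.
Qed.

Theorem lemma4p6 (R : comPzRingType) (l : nat) (u : seq R) (i r : nat)
  (gam : seq (seq nat)) (y : seq (letter R)) :
  (1 <= l)%N -> size u = l -> (1 <= i)%N -> (i <= l)%N -> (1 <= r)%N ->
  strict_multicomp l gam ->
  (forall j, (j < i)%N -> nth [::] gam j = [::]) ->
  (exists rest, nth [::] gam i = r :: rest) ->
  wword u gam = map Red (take i u) ++ Blk r :: y ->
  cyc_zero l u (wword u gam)
    (Tens (Id (map Red (take i u))) (Tens (g_ri r u i) (Id y))).
Proof.
move=> _ Hu Hi Hil Hr Hgam Hnil Hrest Hw.
have bad := bad_word_pull_left Hu Hi Hil Hgam Hnil Hrest Hw.
by rewrite Hw; apply: cyc_zero_factors bad (gprod_factors Hr _ _).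
Qed.
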